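(* Let $\pi>0$, $\bar d>0$, $0<\theta_1<\dots<\theta_K$, $0\le\beta_1<\dots<\beta_M\le1$, and let $A:[0,D]\to[0,\bar d]$ be differentiable with $A'(Q)<0$ on $[0,D]$. Enumerate the $KM$ types $(\beta_m,\theta_k)$ as $\Lambda_1,\dots,\Lambda_{KM}$ and write $L(Q,\beta,\theta)=\theta[\bar d-\beta A(Q)]-\pi(1-\beta)A(Q)$ and $\bar S(Q,\Pi,\Lambda)=L(Q,\Lambda)-\Pi$. Let $\Phi=\{\phi_i=(Q_i,\Pi_i)\}_{i=1}^{KM}$, $Q_i\in[0,D]$, $\Pi_i\in\mathbb{R}$, be a feasible contract, i.e. $\bar S(Q_i,\Pi_i,\Lambda_i)\ge0$ for all $i$ (individual rationality) and $\bar S(Q_i,\Pi_i,\Lambda_i)\ge\bar S(Q_j,\Pi_j,\Lambda_i)$ for all $i\neq j$ (incentive compatibility). Then for all $i,j$: $Q_i<Q_j$ if and only if $\Pi_i<\Pi_j$.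
   Context: Model: an operator offers a contract consisting of one item (data cap $Q_i$, monthly subscription fee $\Pi_i$) intended for each user type $\Lambda_i$. $\pi$ is the overage price, $\bar d$ the mean demand, $A(Q)$ the expected overage consumption under cap $Q$ (decreasing, convex). $L$ is the user's virtual payoff (payoff before the subscription fee), $\bar S$ his expected payoff. *)

From Stdlib Require Export Reals Lra Lia.
Open Scope R_scope.

Definition has_deriv_within (f : R -> R) (a b x l : R) : Prop :=
  forall eps, 0 < eps -> exists delta, 0 < delta /\
    forall y, a <= y <= b -> y <> x -> Rabs (y - x) < delta ->
      Rabs ((f y - f x) / (y - x) - l) < eps.

Definition Lpay (pi dbar : R) (A : R -> R) (Q beta theta : R) : R :=
  theta * (dbar - beta * A Q) - pi * (1 - beta) * A Q.

Definition Spay (pi dbar : R) (A : R -> R) (Q Pi beta theta : R) : R :=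
  Lpay pi dbar A Q beta theta - Pi.

From Stdlib Require Import Reals.
From Coquelicot Require Import Coquelicot.
Open Scope R_scope.

(* The virtual payoff is affine in the overage consumption,
   L(Q, beta, theta) = theta dbar - w(beta, theta) A(Q) with a positive weight
   w(beta, theta) = theta beta + pi (1 - beta).  The two incentive constraints
   between types i and j then squeeze the fee difference Pi_j - Pi_i between
   w_i (A(Q_i) - A(Q_j)) and w_j (A(Q_i) - A(Q_j)), whose sign is that of
   Q_j - Q_i because A is strictly decreasing on [0, D]. *)

Section NegativeDerivativeWithin.

Variables (f : R -> R) (a b : R).

Lemma has_deriv_within_interior (x l : R) :
  a < x < b -> has_deriv_within f a b x l -> derivable_pt_lim f x l.
Proof.
  intros Hx Hd eps Heps.
  destruct (Hd eps Heps) as [delta [Hdelta Hquot]].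
  assert (Hpos : 0 < Rmin delta (Rmin (x - a) (b - x))).
  { apply Rmin_pos; [lra | apply Rmin_pos; lra]. }
  exists (mkposreal _ Hpos); simpl; intros h Hh0 Hh.
  pose proof (Rmin_l delta (Rmin (x - a) (b - x))).
  pose proof (Rmin_r delta (Rmin (x - a) (b - x))).
  pose proof (Rmin_l (x - a) (b - x)). pose proof (Rmin_r (x - a) (b - x)).
  pose proof (Rle_abs h). pose proof (Rle_abs (- h)). rewrite Rabs_Ropp in *.
  replace h with (x + h - x) at 2 by ring.
  apply Hquot; [lra | intro; apply Hh0; lra | replace (x + h - x) with h by ring; lra].
Qed.

Lemma has_deriv_within_neg_quotient (x l : R) :
  has_deriv_within f a b x l -> l < 0 ->
  exists delta, 0 < delta /\ forall y, a <= y <= b -> y <> x -> Rabs (y - x) < delta ->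
    (f y - f x) / (y - x) < 0.
Proof.
  intros Hd Hl.
  destruct (Hd (- l)) as [delta [Hdelta Hquot]]; [lra |].
  exists delta; split; [exact Hdelta |]; intros y Hy Hyx Hdist.
  specialize (Hquot y Hy Hyx Hdist).
  pose proof (Rle_abs ((f y - f x) / (y - x) - l)); lra.
Qed.

Lemma has_deriv_within_neg_right (x y l : R) :
  has_deriv_within f a b x l -> l < 0 -> a <= x < y -> y <= b ->
  exists x1, x < x1 < y /\ f x1 < f x.
Proof.
  intros Hd Hl Hxy Hyb.
  destruct (has_deriv_within_neg_quotient x l Hd Hl) as [delta [Hdelta Hquot]].
  set (h := Rmin delta (y - x) / 2).
  assert (Hh : 0 < h < delta /\ h < y - x).
  { pose proof (Rmin_l delta (y - x)); pose proof (Rmin_r delta (y - x)).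
    assert (0 < Rmin delta (y - x)) by (apply Rmin_pos; lra).
    unfold h; lra. }
  exists (x + h); split; [lra |].
  assert (Hq : (f (x + h) - f x) / (x + h - x) < 0).
  { apply Hquot; [lra | lra | rewrite Rabs_pos_eq; lra]. }
  assert (f (x + h) - f x = (f (x + h) - f x) / (x + h - x) * h) by (field; lra).
  nra.
Qed.

Lemma has_deriv_within_neg_left (w x l : R) :
  has_deriv_within f a b x l -> l < 0 -> a <= w < x -> x <= b ->
  exists w1, w < w1 < x /\ f x < f w1.
Proof.
  intros Hd Hl Hwx Hxb.
  destruct (has_deriv_within_neg_quotient x l Hd Hl) as [delta [Hdelta Hquot]].
  set (h := Rmin delta (x - w) / 2).
  assert (Hh : 0 < h < delta /\ h < x - w).
  { pose proof (Rmin_l delta (x - w)); pose proof (Rmin_r delta (x - w)).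
    assert (0 < Rmin delta (x - w)) by (apply Rmin_pos; lra).
    unfold h; lra. }
  exists (x - h); split; [lra |].
  assert (Hq : (f (x - h) - f x) / (x - h - x) < 0).
  { apply Hquot; [lra | lra | rewrite Rabs_left; lra]. }
  assert (f x - f (x - h) = (f (x - h) - f x) / (x - h - x) * h) by (field; lra).
  nra.
Qed.

Hypothesis f_deriv_neg :
  forall x, a <= x <= b -> exists l, has_deriv_within f a b x l /\ l < 0.

Lemma deriv_neg_decreasing_interior (x y : R) : a < x -> x < y -> y < b -> f y < f x.
Proof.
  intros Hax Hxy Hyb.
  assert (Hderive : forall t, a < t < b -> derivable_pt_lim f t (Derive f t) /\ Derive f t < 0).
  { intros t Ht.
    destruct (f_deriv_neg t) as [l [Hd Hl]]; [lra |].
    pose proof (has_deriv_within_interior t l Ht Hd) as Hlim.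
    rewrite (is_derive_unique f t l); [split; assumption |].
    now apply is_derive_Reals. }
  enough (- f x < - f y) by lra.
  apply (incr_function (fun t => - f t) a b (fun t => - Derive f t));
    simpl; try lra; intros t Hat Htb.
  - apply (is_derive_opp f t (Derive f t)), is_derive_Reals, Hderive; lra.
  - destruct (Hderive t); lra.
Qed.

(* [incr_function] only applies strictly inside [a, b], where the
   one-sided derivative is a genuine one; endpoints are first moved inward. *)
Lemma deriv_neg_decreasing (x y : R) : a <= x -> x < y -> y <= b -> f y < f x.
Proof.
  intros Hax Hxy Hyb.
  destruct (f_deriv_neg x) as [lx [Hdx Hlx]]; [lra |].
  destruct (has_deriv_within_neg_right x y lx Hdx Hlx) as [x1 [Hx1 Hfx1]]; [lra | lra |].
  destruct (f_deriv_neg y) as [ly [Hdy Hly]]; [lra |].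
  destruct (has_deriv_within_neg_left x1 y ly Hdy Hly) as [y1 [Hy1 Hfy1]]; [lra | lra |].
  pose proof (deriv_neg_decreasing_interior x1 y1) as Hmid.
  lra.
Qed.

End NegativeDerivativeWithin.

Definition overage_weight (pi beta theta : R) : R := theta * beta + pi * (1 - beta).

Lemma overage_weight_pos (pi beta theta : R) :
  0 < pi -> 0 < theta -> 0 <= beta <= 1 -> 0 < overage_weight pi beta theta.
Proof. intros Hpi Htheta Hbeta; unfold overage_weight; nra. Qed.

Lemma Spay_affine (pi dbar : R) (A : R -> R) (Q Pi beta theta : R) :
  Spay pi dbar A Q Pi beta theta = theta * dbar - overage_weight pi beta theta * A Q - Pi.
Proof. unfold Spay, Lpay, overage_weight; ring. Qed.

Lemma incentive_compatible_order (wi wj ai aj Pi Pj qi qj : R) :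
  0 < wi -> 0 < wj -> (qi < qj -> aj < ai) -> (qj <= qi -> ai <= aj) ->
  - wi * aj - Pj <= - wi * ai - Pi ->
  - wj * ai - Pi <= - wj * aj - Pj ->
  (qi < qj <-> Pi < Pj).
Proof.
  intros Hwi Hwj Hlt_ij Hle_ji ICi ICj; split; intro Hlt.
  - specialize (Hlt_ij Hlt); nra.
  - destruct (Rlt_or_le qi qj) as [| Hle]; [assumption |].
    specialize (Hle_ji Hle); nra.
Qed.

(* Types Lambda_i = (beta (fst (e i)), theta (snd (e i))), i < K*M,
   where e enumerates {0..M-1} x {0..K-1} bijectively. *)
Theorem lemma3
  (pi dbar D : R) (K M : nat) (theta beta : nat -> R) (A : R -> R)
  (e : nat -> nat * nat) (Q Pi : nat -> R)
  (Hpi : 0 < pi) (Hdbar : 0 < dbar)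
  (Htheta_pos : forall k, (k < K)%nat -> 0 < theta k)
  (Htheta_inc : forall k1 k2, (k1 < k2)%nat -> (k2 < K)%nat -> theta k1 < theta k2)
  (Hbeta_range : forall m, (m < M)%nat -> 0 <= beta m <= 1)
  (Hbeta_inc : forall m1 m2, (m1 < m2)%nat -> (m2 < M)%nat -> beta m1 < beta m2)
  (HA_range : forall q, 0 <= q <= D -> 0 <= A q <= dbar)
  (HA_deriv : forall q, 0 <= q <= D -> exists l, has_deriv_within A 0 D q l /\ l < 0)
  (He_range : forall i, (i < K * M)%nat -> (fst (e i) < M)%nat /\ (snd (e i) < K)%nat)
  (He_inj : forall i j, (i < K * M)%nat -> (j < K * M)%nat -> e i = e j -> i = j)
  (He_surj : forall m k, (m < M)%nat -> (k < K)%nat ->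
                exists i, (i < K * M)%nat /\ e i = (m, k))
  (HQ : forall i, (i < K * M)%nat -> 0 <= Q i <= D)
  (HIR : forall i, (i < K * M)%nat ->
           0 <= Spay pi dbar A (Q i) (Pi i) (beta (fst (e i))) (theta (snd (e i))))
  (HIC : forall i j, (i < K * M)%nat -> (j < K * M)%nat -> i <> j ->
           Spay pi dbar A (Q j) (Pi j) (beta (fst (e i))) (theta (snd (e i)))
           <= Spay pi dbar A (Q i) (Pi i) (beta (fst (e i))) (theta (snd (e i)))) :
  forall i j, (i < K * M)%nat -> (j < K * M)%nat ->
    (Q i < Q j <-> Pi i < Pi j).
Proof.
  intros i j Hi Hj.
  destruct (Nat.eq_dec i j) as [<- | Hij]; [split; intro; lra |].
  pose proof (HIC i j Hi Hj Hij) as ICi.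
  pose proof (HIC j i Hj Hi (not_eq_sym Hij)) as ICj.
  rewrite !Spay_affine in ICi, ICj.
  destruct (He_range i Hi) as [Hmi Hki], (He_range j Hj) as [Hmj Hkj].
  pose proof (HQ i Hi); pose proof (HQ j Hj).
  apply (incentive_compatible_order
           (overage_weight pi (beta (fst (e i))) (theta (snd (e i))))
           (overage_weight pi (beta (fst (e j))) (theta (snd (e j))))
           (A (Q i)) (A (Q j))); try lra.
  - apply overage_weight_pos; auto.
  - apply overage_weight_pos; auto.
  - intro Hlt; apply (deriv_neg_decreasing A 0 D HA_deriv); lra.
  - intros [Hlt | ->]; [| lra].
    left; apply (deriv_neg_decreasing A 0 D HA_deriv); lra.
Qed.
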